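(* Let $X=\{x_1,\dots,x_n\}$ be a finite $T_0$-space admitting a free action of a finite group $G$ by homeomorphisms. Then $\sum_{i=1}^{n}|U_{x_i}|$ and $\sum_{i=1}^{n}|F_{x_i}|$ are multiples of $|G|$.
   Context: For $x\in X$, $U_x$ is the intersection of all open sets containing $x$ and $F_x$ is the intersection of all closed sets containing $x$; equivalently, in the associated poset ($x\le y$ iff $U_x\subseteq U_y$), $U_x=\{y:y\le x\}$ and $F_x=\{y:y\ge x\}$. *)

From mathcomp Require Import all_boot all_fingroup.
Set Implicit Arguments. Unset Strict Implicit. Unset Printing Implicit Defensive.

Section FiniteTopology.
Variable T : finType.

(* [opn] is a topology on T. Since T is finite, closure under binary unions
   (together with set0) gives closure under arbitrary unions. *)
Definition is_topology (opn : {set {set T}}) : Prop :=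
  [/\ set0 \in opn, setT \in opn,
      (forall A B, A \in opn -> B \in opn -> A :|: B \in opn) &
      (forall A B, A \in opn -> B \in opn -> A :&: B \in opn)].

Definition is_T0 (opn : {set {set T}}) : Prop :=
  forall x y : T, x != y ->
    exists2 A, A \in opn & (x \in A) != (y \in A).

Definition Uset (opn : {set {set T}}) (x : T) : {set T} :=
  \bigcap_(A in opn | x \in A) A.

Definition Fset (opn : {set {set T}}) (x : T) : {set T} :=
  \bigcap_(C : {set T} | (~: C \in opn) && (x \in C)) C.

End FiniteTopology.

Definition acts_by_homeos (gT : finGroupType) (T : finType) (G : {group gT})
  (to : action G T) (opn : {set {set T}}) : Prop :=
  forall g, g \in G -> forall A : {set T},
    (A \in opn) = ([set to x g | x in A] \in opn).

Definition free_action (gT : finGroupType) (T : finType) (G : {group gT})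
  (to : action G T) : Prop :=
  forall g, g \in G -> forall x : T, to x g = x -> g = 1%g.

From mathcomp Require Import all_boot all_fingroup.

(* A free action has all its orbits of size |G|, so the sum of any G-invariant
   function over the points is divisible by |G|. A homeomorphism g maps U_x
   onto U_(gx), and F_x = {y | x \in U_y}, so x |-> |U_x| and x |-> |F_x| are
   G-invariant. *)

Section FiniteTopology.
Variables (T : finType) (opn : {set {set T}}).

Lemma mem_Uset (x y : T) :
  reflect (forall A, A \in opn -> x \in A -> y \in A) (y \in Uset opn x).
Proof.
apply: (iffP bigcapP) => [yU A Aopn xA | yU A /andP[]]; last exact: yU.
by apply: yU; rewrite Aopn xA.
Qed.

Lemma mem_FsetE (x y : T) : (y \in Fset opn x) = (x \in Uset opn y).
Proof.
apply/bigcapP/mem_Uset => [yF A Aopn yA | xU C /andP[Copn xC]].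
  apply/negPn/negP => xNA.
  by have := yF (~: A); rewrite setCK Aopn !in_setC xNA yA => /(_ isT).
apply/negPn/negP => yNC.
by have := xU _ Copn; rewrite !in_setC yNC xC => /(_ isT).
Qed.

End FiniteTopology.

Section Action.
Variables (gT : finGroupType) (G : {group gT}) (T : finType).
Variable to : action G T.

Lemma card_orbit_free (x : T) : free_action to -> #|orbit to G x| = #|G|.
Proof.
move=> free; have := card_orbit_in_stab to x (subxx G).
suff -> : #|'C_G[x | to]%g| = 1%N by rewrite muln1.
apply/eqP; rewrite -trivg_card1 eqEsubset sub1G andbT.
apply/subsetP => g; rewrite !inE => /and3P[gG _ /subsetP/(_ x (set11 x))].
by rewrite inE => /eqP /(free g gG) ->.
Qed.

Lemma free_action_dvdn_sum (f : T -> nat) :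
  free_action to -> (forall g x, g \in G -> f (to x g) = f x) ->
  (#|G| %| \sum_(x : T) f x)%N.
Proof.
move=> free f_inv.
have actsT : [acts G, on [set: T] | to].
  by apply/subsetP => g gG; rewrite !inE gG; apply/subsetP => y; rewrite !inE.
have orbitsP := orbit_partition actsT.
have -> : \sum_(x : T) f x = \sum_(x in [set: T]) f x.
  by apply: eq_bigl => x; rewrite inE.
rewrite -(cover_partition orbitsP) big_trivIset; last by case/and3P: orbitsP.
apply: dvdn_sum => _ /imsetP[x _ ->].
rewrite (eq_bigr (fun=> f x)) => [|_ /orbitP[g gG <-]]; last exact: f_inv.
by rewrite sum_nat_const card_orbit_free // dvdn_mulr.
Qed.

Lemma card_act_equivariant (S : T -> {set T}) (g : gT) (x : T) : g \in G ->
  (forall y, (to y g \in S (to x g)) = (y \in S x)) ->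
  #|S (to x g)| = #|S x|.
Proof.
move=> gG equiv; rewrite -(card_setact to (S x) g).
apply: eq_card => y; rewrite -{1}(actKVin to gG y) equiv.
apply/idP/imsetP => [ySx | [z zSx ->]]; last by rewrite actKin.
by exists (to y g^-1)%g; rewrite ?actKVin.
Qed.

Variable opn : {set {set T}}.
Hypothesis homeo : acts_by_homeos to opn.

Lemma mem_Uset_act (g : gT) (x y : T) : g \in G ->
  (to y g \in Uset opn (to x g)) = (y \in Uset opn x).
Proof.
suff Uset_act_sub h u v : h \in G -> v \in Uset opn u -> to v h \in Uset opn (to u h).
  move=> gG; apply/idP/idP; last exact: Uset_act_sub.
  have gVG : (g^-1 \in G)%g by rewrite groupV.
  by move=> /(Uset_act_sub _ _ _ gVG); rewrite !actKin.
move=> hG /mem_Uset vU; apply/mem_Uset => A Aopn uhA.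
have AhVopn : to^* A h^-1%g \in opn by rewrite -homeo ?groupV.
have /(vU _ AhVopn) /imsetP[w wA ->] : u \in to^* A h^-1%g.
  by rewrite -(actKin to hG u) mem_setact.
by rewrite actKVin.
Qed.

Lemma card_Uset_act (g : gT) (x : T) : g \in G ->
  #|Uset opn (to x g)| = #|Uset opn x|.
Proof. by move=> gG; apply: card_act_equivariant => // y; apply: mem_Uset_act. Qed.

Lemma card_Fset_act (g : gT) (x : T) : g \in G ->
  #|Fset opn (to x g)| = #|Fset opn x|.
Proof.
by move=> gG; apply: card_act_equivariant => // y; rewrite !mem_FsetE mem_Uset_act.
Qed.

End Action.

Theorem mainTheorem19 (gT : finGroupType) (G : {group gT}) (T : finType)
  (opn : {set {set T}}) (to : action G T) :
  is_topology opn -> is_T0 opn ->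
  acts_by_homeos to opn -> free_action to ->
  (#|G| %| \sum_(x : T) #|Uset opn x|)%N /\
  (#|G| %| \sum_(x : T) #|Fset opn x|)%N.
Proof.
move=> _ _ homeo free; split.
  apply: (@free_action_dvdn_sum _ _ _ to (fun x => #|Uset opn x|) free).
  exact: card_Uset_act homeo.
apply: (@free_action_dvdn_sum _ _ _ to (fun x => #|Fset opn x|) free).
exact: card_Fset_act homeo.
Qed.
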